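(* Let $\alpha>0$ be non-integer, $n=\lfloor\alpha\rfloor+1$, $a\in\mathbb{R}$, $a(\alpha)=a+n-1$, $c\in\mathbb{R}$, and $f:\mathbb{N}_{a(\alpha)}\times\mathbb{R}\to\mathbb{R}$. Suppose $y:\mathbb{N}_{a(\alpha)}\to\mathbb{R}$ satisfies the initial value problem $$\nabla^{\alpha}_{a(\alpha)-1}y(t)=f(t,y(t)),\quad t=a(\alpha)+1,a(\alpha)+2,\dots,\qquad \nabla^{-(n-\alpha)}_{a(\alpha)-1}y(t)\big|_{t=a(\alpha)}=y(a(\alpha))=c.$$ Then for all $t\in\mathbb{N}_{a(\alpha)}$, $$y(t)=\frac{(t-a(\alpha)+1)^{\overline{\alpha-1}}}{\Gamma(\alpha)}\,c+\nabla^{-\alpha}_{a(\alpha)}f(t,y(t)),$$ where $\nabla^{-\alpha}_{a(\alpha)}f(t,y(t))=\frac{1}{\Gamma(\alpha)}\sum_{s=a(\alpha)+1}^{t}(t-\rho(s))^{\overline{\alpha-1}}f(s,y(s))$.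
   Context: Notation: $\mathbb{N}_c=\{c,c+1,\dots\}$, $\rho(t)=t-1$, $\nabla h(t)=h(t)-h(t-1)$, $\nabla^m=\nabla(\nabla^{m-1})$. Rising factorial $t^{\overline{\gamma}}=\Gamma(t+\gamma)/\Gamma(t)$ with $0^{\overline{\gamma}}=0$. Nabla left fractional sum of order $\gamma>0$ starting at $d$: $\nabla_d^{-\gamma}h(t)=\frac{1}{\Gamma(\gamma)}\sum_{s=d+1}^{t}(t-\rho(s))^{\overline{\gamma-1}}h(s)$, with sums whose upper limit is below the lower limit equal to $0$. Nabla left fractional difference of order $\alpha$: $\nabla_d^{\alpha}h(t)=\nabla^n\nabla_d^{-(n-\alpha)}h(t)$. *)

From Stdlib Require Import Reals Lra Lia ZArith ClassicalEpsilon List.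
Open Scope R_scope.

Fixpoint gauss_den (x : R) (m : nat) : R :=
  match m with
  | O => x
  | S k => gauss_den x k * (x + INR (S k))
  end.

Definition gauss_seq (x : R) (m : nat) : R :=
  INR (fact m) * Rpower (INR m) x / gauss_den x m.

(* Gamma function, defined as the limit of the Gauss product
   (Gamma x = lim_m m! m^x / (x(x+1)...(x+m)), valid for x not in {0,-1,-2,...});
   only used at positive arguments below. *)
Definition Gamma (x : R) : R :=
  epsilon (inhabits 0) (fun l => Un_cv (gauss_seq x) l).

Definition rising (t g : R) : R :=
  if Req_EM_T t 0 then 0 else Gamma (t + g) / Gamma t.

Definition nabla (h : R -> R) (t : R) : R := h t - h (t - 1).
Definition nabla_iter (m : nat) (h : R -> R) : R -> R := Nat.iter m nabla h.

(* number of lattice points s = d+1, d+2, ..., t  (t - d integer);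
   0 when t <= d (empty sum convention) *)
Definition nterms (t d : R) : nat := Z.to_nat (up (t - d) - 1).

(* nabla left fractional sum of order g starting at d:
   (1/Gamma g) * sum_{s=d+1}^{t} (t - rho(s))^{(g-1)} h(s) *)
Definition frac_sum (g d : R) (h : R -> R) (t : R) : R :=
  / Gamma g *
  fold_right Rplus 0
    (map (fun j : nat => rising (t - (d + INR j - 1)) (g - 1) * h (d + INR j))
         (seq 1 (nterms t d))).

(* nabla left fractional difference of order alpha, with n = floor(alpha)+1 *)
Definition frac_diff (n : nat) (alpha d : R) (h : R -> R) (t : R) : R :=
  nabla_iter n (frac_sum (INR n - alpha) d h) t.

From Stdlib Require Import Reals Lra Lia ZArith ClassicalEpsilon.
From mathcomp Require all_boot all_algebra Rstruct ring.
Open Scope R_scope.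

(* Put A = a(alpha) and index the lattice A, A+1, ... by k = 0, 1, ...  On this
   lattice every operator in the statement is a Cauchy product with the nabla
   weights  weight g k = g (g+1) ... (g+k-1) / k!,  the coefficients of
   (1 - X)^(-g):  the fractional sum of order g > 0 is the product with the
   weights of order g (since (k+1)^{(g-1)} / Gamma g = weight g k), and the
   m-th backward difference of a function supported on the lattice is the
   product with the weights of order -m.  By Chu-Vandermonde the weights form a
   one-parameter group under Cauchy product, so the equation together with the
   initial value says  weight(-alpha) * y = G  with G = (c, f(A+1, y(A+1)), ...);
   inverting gives  y = weight(alpha) * G,  which is the claimed formula. *)

Lemma exp_le_mono x y : x <= y -> exp x <= exp y.
Proof. intros [H|H]; [left; apply exp_increasing; auto | subst; lra]. Qed.

Lemma ln_le_mono x y : 0 < x -> x <= y -> ln x <= ln y.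
Proof. intros Hx [H|H]; [left; apply ln_increasing; auto | subst; lra]. Qed.

Lemma INR_S_pos k : 0 < INR (S k).
Proof. apply lt_0_INR; lia. Qed.

Fixpoint gauss_prod (x : R) (m : nat) : R :=
  match m with O => 1 | S k => gauss_prod x k * (1 + x / INR (S k)) end.

Lemma gauss_prod_pos x m : 0 < x -> 0 < gauss_prod x m.
Proof.
  intros Hx; induction m as [|k IH]; cbn [gauss_prod]; [lra|].
  pose proof (INR_S_pos k).
  assert (0 < x / INR (S k)) by (apply Rdiv_lt_0_compat; lra).
  apply Rmult_lt_0_compat; lra.
Qed.

Lemma gauss_den_factor x m : gauss_den x m = x * INR (fact m) * gauss_prod x m.
Proof.
  induction m as [|k IH]; cbn [gauss_den gauss_prod]; [simpl; ring|].
  rewrite IH. change (fact (S k)) with (S k * fact k)%nat.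
  rewrite mult_INR. pose proof (INR_S_pos k). field. lra.
Qed.

Lemma gauss_den_pos x m : 0 < x -> 0 < gauss_den x m.
Proof.
  intros Hx. rewrite gauss_den_factor.
  pose proof (lt_0_INR _ (lt_O_fact m)). pose proof (gauss_prod_pos x m Hx).
  apply Rmult_lt_0_compat; [apply Rmult_lt_0_compat|]; lra.
Qed.

Lemma gauss_seq_eq x m : 0 < x ->
  gauss_seq x m = Rpower (INR m) x / (x * gauss_prod x m).
Proof.
  intros Hx. unfold gauss_seq. rewrite gauss_den_factor.
  pose proof (lt_0_INR _ (lt_O_fact m)). pose proof (gauss_prod_pos x m Hx).
  field. repeat split; lra.
Qed.

Fixpoint harmonic (m : nat) : R :=
  match m with O => 0 | S k => harmonic k + / INR (S k) end.
Fixpoint sum_inv_sq (m : nat) : R :=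
  match m with O => 0 | S k => sum_inv_sq k + / (INR (S k) * INR (S k)) end.

Lemma succ_le_exp_harmonic m : INR (S m) <= exp (harmonic m).
Proof.
  induction m as [|k IH]; cbn [harmonic]; [rewrite exp_0; simpl; lra|].
  rewrite exp_plus. pose proof (exp_ineq1_le (/ INR (S k))).
  pose proof (INR_S_pos k).
  assert (E : INR (S (S k)) = INR (S k) * (1 + / INR (S k))).
  { rewrite (S_INR (S k)). field. lra. }
  rewrite E. apply Rmult_le_compat; try lra.
  assert (0 < / INR (S k)) by (apply Rinv_0_lt_compat; lra). lra.
Qed.

Lemma sum_inv_sq_le_telescope m : sum_inv_sq (S m) <= 2 - / INR (S m).
Proof.
  induction m as [|k IH]; [simpl; lra|].
  change (sum_inv_sq (S (S k)))
    with (sum_inv_sq (S k) + / (INR (S (S k)) * INR (S (S k)))).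
  rewrite (S_INR (S k)). pose proof (INR_S_pos k).
  assert (/ ((INR (S k) + 1) * (INR (S k) + 1)) <= / INR (S k) - / (INR (S k) + 1)).
  { replace (/ INR (S k) - / (INR (S k) + 1))
      with (/ (INR (S k) * (INR (S k) + 1))) by (field; lra).
    apply Rinv_le_contravar; nra. }
  lra.
Qed.

Lemma sum_inv_sq_bounds m : 0 <= sum_inv_sq m <= 2.
Proof.
  split.
  - induction m as [|k IH]; cbn [sum_inv_sq]; [lra|]. pose proof (INR_S_pos k).
    assert (0 < / (INR (S k) * INR (S k))) by (apply Rinv_0_lt_compat; nra). lra.
  - destruct m as [|m]; [simpl; lra|].
    pose proof (sum_inv_sq_le_telescope m). pose proof (INR_S_pos m).
    assert (0 < / INR (S m)) by (apply Rinv_0_lt_compat; lra). lra.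
Qed.

Lemma exp_sub_sq_le u : 0 <= u -> exp (u - u * u) <= 1 + u.
Proof.
  intros Hu.
  pose proof (exp_ineq1_le (- (u - u * u))) as H1.
  assert (HE : exp (u - u * u) * exp (- (u - u * u)) = 1).
  { rewrite <- exp_plus. replace (u - u * u + - (u - u * u)) with 0 by ring.
    apply exp_0. }
  pose proof (exp_pos (u - u * u)).
  assert (Hq : 0 < 1 - u + u * u) by nra.
  assert (exp (u - u * u) * (1 - u + u * u) <= (1 + u) * (1 - u + u * u)).
  { assert (exp (u - u * u) * (1 - u + u * u) <= exp (u - u * u) * exp (- (u - u * u)))
      by (apply Rmult_le_compat_l; lra).
    nra. }
  nra.
Qed.

Lemma gauss_prod_lower x m : 0 < x ->
  exp (x * harmonic m - x * x * sum_inv_sq m) <= gauss_prod x m.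
Proof.
  intros Hx; induction m as [|k IH]; cbn [gauss_prod harmonic sum_inv_sq].
  - replace (x * 0 - x * x * 0) with 0 by ring. rewrite exp_0; lra.
  - pose proof (INR_S_pos k). set (u := x / INR (S k)).
    replace (x * (harmonic k + / INR (S k))
             - x * x * (sum_inv_sq k + / (INR (S k) * INR (S k))))
      with ((x * harmonic k - x * x * sum_inv_sq k) + (u - u * u))
      by (unfold u; field; lra).
    rewrite exp_plus. apply Rmult_le_compat; try (left; apply exp_pos); auto.
    apply exp_sub_sq_le. unfold u. left; apply Rdiv_lt_0_compat; lra.
Qed.

Lemma gauss_seq_bounded x m : 0 < x -> (1 <= m)%nat ->
  gauss_seq x m <= exp (2 * x * x) / x.
Proof.
  intros Hx Hm. rewrite gauss_seq_eq by exact Hx.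
  assert (HmR : 0 < INR m) by (apply lt_0_INR; lia).
  assert (Hln : ln (INR m) <= harmonic m).
  { destruct m as [|m']; [lia|].
    rewrite <- (ln_exp (harmonic (S m'))). apply ln_le_mono; [exact HmR|].
    pose proof (succ_le_exp_harmonic (S m')). rewrite (S_INR (S m')) in *. lra. }
  assert (HP : Rpower (INR m) x * exp (- (2 * x * x)) <= gauss_prod x m).
  { unfold Rpower. rewrite <- exp_plus. eapply Rle_trans; [|apply gauss_prod_lower; auto].
    apply exp_le_mono. pose proof (sum_inv_sq_bounds m). nra. }
  pose proof (gauss_prod_pos x m Hx). pose proof (exp_pos (- (2 * x * x))).
  pose proof (exp_pos (x * ln (INR m))). unfold Rpower in *.
  replace (exp (2 * x * x)) with (/ exp (- (2 * x * x))) by (rewrite exp_Ropp; field;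
    apply Rgt_not_eq, exp_pos).
  apply (Rmult_le_reg_r (x * gauss_prod x m * exp (- (2 * x * x)))).
  { repeat apply Rmult_lt_0_compat; lra. }
  replace (exp (x * ln (INR m)) / (x * gauss_prod x m) * (x * gauss_prod x m * exp (- (2 * x * x))))
    with (exp (x * ln (INR m)) * exp (- (2 * x * x))) by (field; lra).
  replace (/ exp (- (2 * x * x)) / x * (x * gauss_prod x m * exp (- (2 * x * x))))
    with (gauss_prod x m) by (field; lra).
  exact HP.
Qed.
Lemma inv_succ_le_ln_gap (M : R) : 0 < M -> / (M + 1) <= ln (M + 1) - ln M.
Proof.
  intros HM. pose proof (exp_ineq1_le (ln M - ln (M + 1))) as H1.
  unfold Rminus in H1 at 2. rewrite exp_plus, exp_Ropp, !exp_ln in H1 by lra.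
  assert (M * / (M + 1) = 1 - / (M + 1)) by (field; lra). lra.
Qed.

Lemma gauss_seq_incr x M : 0 < x -> (1 <= M)%nat -> gauss_seq x M <= gauss_seq x (S M).
Proof.
  intros Hx HM. rewrite !gauss_seq_eq by exact Hx. cbn [gauss_prod].
  assert (HMR : 0 < INR M) by (apply lt_0_INR; lia).
  rewrite (S_INR M). set (q := 1 + x / (INR M + 1)).
  assert (Hq : 0 < q) by (assert (0 < x / (INR M + 1)) by (apply Rdiv_lt_0_compat; lra);
                            unfold q; lra).
  assert (Hpow : Rpower (INR M) x * q <= Rpower (INR M + 1) x).
  { unfold Rpower.
    replace (x * ln (INR M + 1)) with (x * ln (INR M) + x * (ln (INR M + 1) - ln (INR M)))
      by ring.
    rewrite exp_plus. apply Rmult_le_compat_l; [left; apply exp_pos|].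
    eapply Rle_trans; [|apply exp_ineq1_le].
    pose proof (inv_succ_le_ln_gap (INR M) HMR).
    unfold q, Rdiv. apply Rplus_le_compat_l. apply Rmult_le_compat_l; lra. }
  pose proof (gauss_prod_pos x M Hx).
  apply (Rmult_le_reg_r (x * (gauss_prod x M * q))); [repeat apply Rmult_lt_0_compat; lra|].
  replace (Rpower (INR M) x / (x * gauss_prod x M) * (x * (gauss_prod x M * q)))
    with (Rpower (INR M) x * q) by (field; lra).
  replace (Rpower (INR M + 1) x / (x * (gauss_prod x M * q)) * (x * (gauss_prod x M * q)))
    with (Rpower (INR M + 1) x) by (field; lra).
  exact Hpow.
Qed.

Lemma Un_cv_eq_from_1 (u v : nat -> R) l : (forall m, (1 <= m)%nat -> u m = v m) ->
  Un_cv v l -> Un_cv u l.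
Proof.
  intros E H eps He. destruct (H eps He) as [N HN]. exists (S N).
  intros m Hm. rewrite E by lia. apply HN. lia.
Qed.

Lemma gauss_seq_cv x : 0 < x -> exists L, 0 < L /\ Un_cv (gauss_seq x) L.
Proof.
  intros Hx. set (u := fun m => gauss_seq x (S m)).
  assert (Hg : Un_growing u) by (intros m; apply gauss_seq_incr; auto; lia).
  assert (Hb : has_ub u).
  { exists (exp (2 * x * x) / x). intros z [i ->]. apply gauss_seq_bounded; auto; lia. }
  destruct (growing_cv _ Hg Hb) as [l Hl]. exists l. split.
  - pose proof (growing_ineq _ _ Hg Hl 0).
    assert (0 < gauss_seq x 1).
    { rewrite gauss_seq_eq by exact Hx. pose proof (gauss_prod_pos x 1 Hx).
      unfold Rpower. apply Rdiv_lt_0_compat; [apply exp_pos|]. nra. }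
    unfold u in *. lra.
  - apply (CV_shift _ 1). eapply Un_cv_ext; [|exact Hl].
    intros m. unfold u. f_equal. lia.
Qed.

Lemma Gamma_spec x : 0 < x -> 0 < Gamma x /\ Un_cv (gauss_seq x) (Gamma x).
Proof.
  intros Hx. destruct (gauss_seq_cv x Hx) as [L [HL HcL]].
  assert (Hs : Un_cv (gauss_seq x) (Gamma x)).
  { unfold Gamma. apply epsilon_spec. exists L; exact HcL. }
  split; [rewrite (UL_sequence _ _ _ Hs HcL)|]; assumption.
Qed.

Lemma Gamma_pos x : 0 < x -> 0 < Gamma x.
Proof. intros Hx; apply (Gamma_spec x Hx). Qed.

Lemma Un_cv_ratio_succ b : 0 < b -> Un_cv (fun m => INR m / (INR m + b)) 1.
Proof.
  intros Hb eps He. destruct (INR_unbounded (b / eps)) as [N HN]. exists N.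
  intros m Hm. unfold R_dist. apply le_INR in Hm.
  assert (0 <= INR m) by apply pos_INR.
  assert (b / eps * eps = b) by (field; lra).
  assert (b < eps * INR m) by nra.
  replace (INR m / (INR m + b) - 1) with (- (b / (INR m + b))) by (field; lra).
  rewrite Rabs_Ropp, Rabs_right by (left; apply Rdiv_lt_0_compat; lra).
  apply (Rmult_lt_reg_r (INR m + b)); [lra|]. unfold Rdiv.
  rewrite Rmult_assoc, Rinv_l by lra. nra.
Qed.

Lemma gauss_den_succ x m : gauss_den (x + 1) m * x = gauss_den x m * (x + INR m + 1).
Proof.
  induction m as [|k IH]; cbn [gauss_den]; [simpl; ring|].
  rewrite S_INR.
  replace (gauss_den (x + 1) k * (x + 1 + (INR k + 1)) * x)
    with (gauss_den (x + 1) k * x * (x + 1 + (INR k + 1))) by ring.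
  rewrite IH. ring.
Qed.

Lemma Gamma_succ x : 0 < x -> Gamma (x + 1) = x * Gamma x.
Proof.
  intros Hx. destruct (Gamma_spec x Hx) as [_ Hc].
  destruct (Gamma_spec (x + 1)) as [_ Hc1]; [lra|].
  apply (UL_sequence (gauss_seq (x + 1))); [exact Hc1|].
  apply Un_cv_eq_from_1 with (fun m => gauss_seq x m * (x * (INR m / (INR m + (x + 1))))).
  - intros m Hm. assert (HmR : 0 < INR m) by (apply lt_0_INR; lia).
    pose proof (gauss_den_pos x m Hx).
    assert (HD1 : gauss_den (x + 1) m = gauss_den x m * (x + INR m + 1) / x).
    { rewrite <- gauss_den_succ. field. lra. }
    unfold gauss_seq. rewrite Rpower_plus, Rpower_1, HD1 by exact HmR.
    field. repeat split; lra.
  - replace (x * Gamma x) with (Gamma x * (x * 1)) by ring.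
    apply CV_mult; [exact Hc|]. apply (CV_mult (fun _ => x)); [|apply Un_cv_ratio_succ; lra].
    intros e He; exists 0%nat; intros; unfold R_dist. rewrite Rminus_diag, Rabs_R0; exact He.
Qed.

(* Gamma 1 = 1, since gauss_seq 1 m = m / (m + 1). *)
Lemma Gamma_1 : Gamma 1 = 1.
Proof.
  destruct (Gamma_spec 1) as [_ Hc]; [lra|].
  apply (UL_sequence (gauss_seq 1)); [exact Hc|].
  apply Un_cv_eq_from_1 with (fun m => INR m / (INR m + 1)); [|apply Un_cv_ratio_succ; lra].
  intros m Hm. assert (HmR : 0 < INR m) by (apply lt_0_INR; lia).
  assert (E : gauss_den 1 m = INR (fact (S m))).
  { clear. induction m as [|k IH]; cbn [gauss_den]; [simpl; ring|].
    rewrite IH. change (fact (S (S k))) with (S (S k) * fact (S k))%nat.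
    rewrite mult_INR, (S_INR (S k)). ring. }
  unfold gauss_seq. rewrite E, Rpower_1 by exact HmR.
  change (fact (S m)) with (S m * fact m)%nat. rewrite mult_INR, S_INR.
  pose proof (lt_0_INR _ (lt_O_fact m)). field. lra.
Qed.

(* The nabla weights  weight g k = g (g+1) ... (g+k-1) / k!,  i.e. the
   coefficients of (1 - X)^(-g); for g > 0 they are the values of the
   kernel (k+1)^{(g-1)} / Gamma g of the fractional sum of order g. *)
Fixpoint weight (g : R) (k : nat) : R :=
  match k with O => 1 | S j => weight g j * (INR j + g) / (INR j + 1) end.

Lemma weight_S g j : weight g (S j) = weight g j * (INR j + g) / (INR j + 1).
Proof. reflexivity. Qed.

Lemma weight_Gamma g j : 0 < g ->
  weight g j = Gamma (INR j + g) / Gamma (INR j + 1) / Gamma g.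
Proof.
  intros Hg. pose proof (Gamma_pos g Hg).
  induction j as [|j IH].
  - replace (INR 0 + g) with g by (simpl; ring).
    replace (INR 0 + 1) with 1 by (simpl; ring).
    rewrite Gamma_1. simpl. field. lra.
  - rewrite weight_S, IH, S_INR. pose proof (pos_INR j).
    replace (INR j + 1 + g) with ((INR j + g) + 1) by ring.
    rewrite (Gamma_succ (INR j + g)), (Gamma_succ (INR j + 1)) by lra.
    pose proof (Gamma_pos (INR j + g)). pose proof (Gamma_pos (INR j + 1)).
    field. repeat split; lra.
Qed.

Lemma rising_weight g j : 0 < g -> rising (INR j + 1) (g - 1) / Gamma g = weight g j.
Proof.
  intros Hg. rewrite weight_Gamma by exact Hg. unfold rising.
  pose proof (pos_INR j).
  destruct (Req_EM_T (INR j + 1) 0) as [E|E]; [lra|].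
  replace (INR j + 1 + (g - 1)) with (INR j + g) by ring. reflexivity.
Qed.

Lemma weight_0_S j : weight 0 (S j) = 0.
Proof.
  induction j as [|j IH]; rewrite weight_S; [simpl; field|].
  rewrite IH. unfold Rdiv. ring.
Qed.

Lemma weight_m1_1 : weight (-1) 1 = -1.
Proof. simpl. field. Qed.

Lemma weight_m1_SS j : weight (-1) (S (S j)) = 0.
Proof.
  induction j as [|j IH]; rewrite weight_S; [rewrite weight_m1_1; simpl; field|].
  rewrite IH. unfold Rdiv. ring.
Qed.

Module Convolution.
Import all_boot all_algebra Rstruct ring.
Import GRing.Theory Num.Theory.
Local Open Scope ring_scope.

Definition conv (A B : nat -> R) (k : nat) : R := \sum_(i < k.+1) A i * B (k - i)%N.

Definition sum_lt (m : nat) (F : nat -> R) : R := \sum_(i < m) F i.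

Lemma conv_ext A A' B B' k : (forall i, A i = A' i) -> (forall i, B i = B' i) ->
  conv A B k = conv A' B' k.
Proof. by move=> HA HB; apply: eq_bigr => i _; rewrite HA HB. Qed.

Lemma conv0 A B : conv A B 0 = Rmult (A 0%N) (B 0%N).
Proof. by rewrite /conv big_ord1. Qed.

(* The first N terms of a sequence, as a polynomial: the coefficients of
   products of truncations are the Cauchy products below N. *)
Definition trunc (N : nat) (A : nat -> R) : {poly R} := \poly_(i < N) A i.

Lemma conv_coef N A B k : (k < N)%N -> conv A B k = (trunc N A * trunc N B)`_k.
Proof.
  move=> ltkN; rewrite coefM; apply: eq_bigr => i _; rewrite !coef_poly.
  have -> : (i < N)%N by apply: leq_ltn_trans ltkN; rewrite -ltnS.
  by have -> : (k - i < N)%N by apply: leq_ltn_trans ltkN; apply: leq_subr.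
Qed.

Lemma trunc_conv_coef N A B i : (i < N)%N ->
  (trunc N (conv A B))`_i = (trunc N A * trunc N B)`_i.
Proof. by move=> ltiN; rewrite coef_poly ltiN (conv_coef N). Qed.

Lemma coefM_congr N (r p q : {poly R}) k : (forall i, (i < N)%N -> p`_i = q`_i) ->
  (k < N)%N -> (r * p)`_k = (r * q)`_k.
Proof.
  move=> Epq ltkN; rewrite !coefM; apply: eq_bigr => i _; rewrite Epq //.
  by apply: leq_ltn_trans ltkN; apply: leq_subr.
Qed.

(* Commutativity and associativity, inherited from polynomial multiplication. *)
Lemma conv_comm A B k : conv A B k = conv B A k.
Proof. by rewrite (conv_coef k.+1) // (conv_coef k.+1 B) // mulrC. Qed.

Lemma conv_assoc A B C k : conv A (conv B C) k = conv (conv A B) C k.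
Proof.
  have EBC := @coefM_congr k.+1 (trunc k.+1 A) _ (trunc k.+1 B * trunc k.+1 C) k
    (fun i lti => trunc_conv_coef k.+1 B C i lti) (ltnSn k).
  have EAB := @coefM_congr k.+1 (trunc k.+1 C) _ (trunc k.+1 A * trunc k.+1 B) k
    (fun i lti => trunc_conv_coef k.+1 A B i lti) (ltnSn k).
  rewrite (conv_coef k.+1) // EBC conv_comm (conv_coef k.+1) // EAB.
  by rewrite mulrA mulrC.
Qed.

Lemma weight_0 g : weight g 0 = 1.
Proof. by []. Qed.

Lemma weight_S_mul g j : weight g j.+1 * j.+1%:R = weight g j * (j%:R + g).
Proof.
  rewrite weight_S !RdivE !RmultE !RplusE !INRE R1E natr1.
  have nz : j.+1%:R != 0 :> R by rewrite pnatr_eq0.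
  by rewrite -mulrA mulVf // mulr1.
Qed.

(* Chu-Vandermonde: (1 - X)^(-a) (1 - X)^(-b) = (1 - X)^(-(a + b)). *)
Lemma conv_weight a b k : conv (weight a) (weight b) k = weight (a + b) k.
Proof.
  elim: k => [|k IH]; first by rewrite conv0 /= RmultE R1E mulr1.
  have nz : k.+1%:R != 0 :> R by rewrite pnatr_eq0.
  apply: (mulIf nz); rewrite weight_S_mul -IH /conv mulr_suml.
  transitivity (\sum_(i < k.+2) (weight a i * i%:R) * weight b (k.+1 - i)%N
      + \sum_(i < k.+2) weight a i * (weight b (k.+1 - i)%N * (k.+1 - i)%N%:R)).
    rewrite -big_split /=; apply: eq_bigr => i _.
    have lei : (i <= k.+1)%N by rewrite -ltnS.
    have -> : k.+1%:R = i%:R + (k.+1 - i)%:R :> R by rewrite -natrD subnKC.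
    ring.
  rewrite big_ord_recl /= mulr0 mul0r add0r.
  rewrite [X in _ + X]big_ord_recr /= subnn mulr0 mulr0 addr0.
  rewrite mulr_suml -big_split /=; apply: eq_bigr => i _.
  have lei : (i <= k)%N by rewrite -ltnS.
  rewrite /bump /= add1n subSS weight_S_mul subSn // weight_S_mul natrB // add0n RplusE.
  ring.
Qed.

Lemma conv_weight_compose a b Y k :
  conv (weight a) (conv (weight b) Y) k = conv (weight (Rplus a b)) Y k.
Proof.
  by rewrite conv_assoc; apply: conv_ext => // i; rewrite conv_weight.
Qed.

Lemma conv_weight_0 Y k : conv (weight 0) Y k = Y k.
Proof.
  rewrite /conv big_ord_recl subn0 big1 => [|i _]; last first.
    by rewrite lift0 weight_0_S mul0r.
  by rewrite weight_0 mul1r addr0.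
Qed.

Lemma conv_weight_m1 Z k : conv (weight (-1)) Z k.+1 = Rminus (Z k.+1) (Z k).
Proof.
  rewrite /conv big_ord_recl big_ord_recl big1 ?addr0; last first.
    by move=> i _; rewrite !lift0 weight_m1_SS mul0r.
  by rewrite lift0 weight_m1_1 subSS !subn0 weight_0 mul1r mulN1r RminusE.
Qed.

Lemma conv_weight_pred g X k :
  conv (weight (Rminus g 1)) X k.+1 = Rminus (conv (weight g) X k.+1) (conv (weight g) X k).
Proof.
  have -> : Rminus g 1 = Rplus (-1) g by rewrite RminusE RplusE addrC.
  by rewrite -conv_weight_compose conv_weight_m1.
Qed.

Lemma conv_split_first A B k :
  conv A B k = Rplus (Rmult (B 0%N) (A k)) (sum_lt k (fun i => Rmult (B i.+1) (A (k - i.+1)%N))).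
Proof. by rewrite conv_comm /conv big_ord_recl subn0. Qed.

Lemma fold_right_sum_lt s m F :
  List.fold_right Rplus 0 (List.map F (List.seq s m)) = sum_lt m (fun i => F (s + i)%N).
Proof.
  elim: m s => [|m IH] s; first by rewrite /sum_lt big_ord0.
  rewrite /= IH /sum_lt big_ord_recl /= addn0 RplusE; congr (_ + _).
  by apply: eq_bigr => i _; rewrite /bump leq0n addnS addSn.
Qed.

Lemma sum_lt_ext m F G : (forall i, Peano.lt i m -> F i = G i) -> sum_lt m F = sum_lt m G.
Proof. by move=> EFG; apply: eq_bigr => i _; apply: EFG; apply/ltP. Qed.

Lemma sum_lt_scale c m F : Rmult c (sum_lt m F) = sum_lt m (fun i => Rmult c (F i)).
Proof. by rewrite /sum_lt RmultE mulr_sumr. Qed.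

End Convolution.

Import Convolution.

Lemma conv_weight_inverse g (Y Z : nat -> R) :
  (forall k, conv (weight (- g)) Y k = Z k) -> forall k, Y k = conv (weight g) Z k.
Proof.
  intros HYZ k. rewrite <- (conv_ext (weight g) (weight g) _ _ k (fun i => eq_refl) HYZ).
  rewrite conv_weight_compose. replace (g + - g) with 0 by ring.
  symmetry. apply conv_weight_0.
Qed.

Lemma up_IZR z : up (IZR z) = (z + 1)%Z.
Proof. symmetry. apply tech_up; rewrite plus_IZR; simpl; lra. Qed.

Lemma nterms_lattice d k : nterms (d + INR k) d = k.
Proof.
  unfold nterms. replace (d + INR k - d) with (IZR (Z.of_nat k))
    by (rewrite <- INR_IZR_INZ; ring).
  rewrite up_IZR. replace (Z.of_nat k + 1 - 1)%Z with (Z.of_nat k) by ring.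
  apply Nat2Z.id.
Qed.

Lemma nterms_below d j : nterms (d - INR j) d = 0%nat.
Proof.
  unfold nterms. replace (d - INR j - d) with (IZR (- Z.of_nat j))
    by (rewrite opp_IZR, <- INR_IZR_INZ; ring).
  rewrite up_IZR. lia.
Qed.

Lemma frac_sum_below g d h j : frac_sum g d h (d - INR j) = 0.
Proof. unfold frac_sum. rewrite nterms_below. simpl. ring. Qed.

Lemma frac_sum_lattice g d h k : 0 < g ->
  frac_sum g d h (d + INR k) = sum_lt k (fun i => h (d + INR (S i)) * weight g (k - S i)).
Proof.
  intros Hg. unfold frac_sum. rewrite nterms_lattice, fold_right_sum_lt, sum_lt_scale.
  apply sum_lt_ext. intros i Hi. change (ssrnat.addn 1 i) with (S i).
  rewrite <- (rising_weight g (k - S i)) by exact Hg.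
  rewrite minus_INR by lia.
  replace (d + INR k - (d + INR (S i) - 1)) with (INR k - INR (S i) + 1) by ring.
  unfold Rdiv. ring.
Qed.

Lemma frac_sum_conv g d h k : 0 < g ->
  frac_sum g d h (d + INR (S k)) = conv (weight g) (fun i => h (d + INR (S i))) k.
Proof.
  intros Hg. rewrite frac_sum_lattice by exact Hg.
  rewrite conv_comm. reflexivity.
Qed.

Lemma nabla_iter_S m h t : nabla_iter (S m) h t = nabla_iter m h t - nabla_iter m h (t - 1).
Proof. reflexivity. Qed.

Lemma nabla_iter_lattice (F : R -> R) d (X : nat -> R) :
  (forall k, F (d + INR (S k)) = X k) -> (forall j, F (d - INR j) = 0) ->
  forall m, (forall k, nabla_iter m F (d + INR (S k)) = conv (weight (- INR m)) X k) /\
            (forall j, nabla_iter m F (d - INR j) = 0).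
Proof.
  intros HX H0 m. induction m as [|m [IHlat IHbelow]].
  - split; [|exact H0]. intros k. replace (- INR 0) with 0 by (simpl; ring).
    rewrite conv_weight_0. apply HX.
  - split.
    + intros [|k]; rewrite nabla_iter_S.
      * replace (d + INR 1 - 1) with (d - INR 0) by (simpl; ring).
        rewrite IHbelow, IHlat, !conv0. simpl weight. ring.
      * replace (d + INR (S (S k)) - 1) with (d + INR (S k)) by (rewrite (S_INR (S k)); ring).
        rewrite !IHlat, <- conv_weight_pred, S_INR.
        replace (- (INR m + 1)) with (- INR m - 1) by ring. reflexivity.
    + intros j. rewrite nabla_iter_S.
      replace (d - INR j - 1) with (d - INR (S j)) by (rewrite S_INR; ring).
      rewrite !IHbelow. ring.
Qed.

(* Only y(a(alpha)) = c is used as initial condition (the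
   other one states the same thing, since a fractional sum at its first lattice
   point is the value there), and non-integrality of alpha plays no role. *)
Theorem theorem5p1
  (alpha : R) (n : nat) (a c : R) (f : R -> R -> R) (y : R -> R)
  (Halpha : 0 < alpha)
  (Hnonint : forall z : Z, alpha <> IZR z)
  (Hn : INR n - 1 <= alpha < INR n)
  (Heq : forall k : nat, (1 <= k)%nat ->
     frac_diff n alpha (a + INR n - 1 - 1) y (a + INR n - 1 + INR k)
     = f (a + INR n - 1 + INR k) (y (a + INR n - 1 + INR k)))
  (Hinit1 : frac_sum (INR n - alpha) (a + INR n - 1 - 1) y (a + INR n - 1) = c)
  (Hinit2 : y (a + INR n - 1) = c) :
  forall k : nat,
    let t := a + INR n - 1 + INR k in
    y t = rising (t - (a + INR n - 1) + 1) (alpha - 1) / Gamma alpha * c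
          + frac_sum alpha (a + INR n - 1) (fun s => f s (y s)) t.
Proof.
  intros k t; subst t.
  set (A := a + INR n - 1) in *. set (d := A - 1) in *.
  assert (Hd : forall i, d + INR (S i) = A + INR i) by (intros i; unfold d; rewrite S_INR; ring).
  (* the values of y on the lattice, and the right-hand side with initial value c *)
  set (Ys := fun i => y (A + INR i)).
  set (G := fun i => match i with O => c | S _ => f (A + INR i) (y (A + INR i)) end).
  (* the equation and the initial condition say  (weights of order -alpha) * Ys = G *)
  assert (Hdiff : forall i, conv (weight (- alpha)) Ys i = G i).
  { assert (Hsum : forall i, frac_sum (INR n - alpha) d y (d + INR (S i))
                             = conv (weight (INR n - alpha)) Ys i).
    { intros i. rewrite frac_sum_conv by lra. apply conv_ext; intros; [reflexivity|].
      unfold Ys. rewrite Hd. reflexivity. }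
    destruct (nabla_iter_lattice _ d _ Hsum (frac_sum_below (INR n - alpha) d y) n)
      as [Hlat _].
    intros [|i].
    - rewrite conv0. unfold Ys, G. replace (A + INR 0) with A by (simpl; ring).
      simpl weight. rewrite Hinit2. ring.
    - replace (- alpha) with (- INR n + (INR n - alpha)) by ring.
      rewrite <- conv_weight_compose, <- Hlat, Hd. apply Heq. lia. }
  (* invert the weights and read off the first term and the fractional sum *)
  change (y (A + INR k)) with (Ys k).
  rewrite (conv_weight_inverse alpha Ys G Hdiff k), conv_split_first.
  replace (A + INR k - A + 1) with (INR k + 1) by ring.
  rewrite rising_weight, frac_sum_lattice by exact Halpha.
  simpl (G 0%nat). f_equal. ring.
Qed.
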